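(* Let $I\subset S$ be a squarefree monomial ideal generated by monomials of degree at least $2$, and let $k\ge 0$. Then $I$ is $k$-clean if and only if its Alexander dual $I^\vee$ is a $k$-decomposable monomial ideal.
   Context: $S=K[x_1,\dots,x_n]$, $K$ a field. Every such $I$ equals $I_\Delta$ (Stanley–Reisner ideal, generated by $\prod_{i\in F}x_i$ for non-faces $F$) for a simplicial complex $\Delta$ on $[n]$; its Alexander dual is $I^\vee=I_{\Delta^\vee}$ where $\Delta^\vee=\{F\subseteq[n]:[n]\setminus F\notin\Delta\}$. For a monomial $u=x_1^{a_1}\cdots x_n^{a_n}$, $\mathrm{supp}(u)=\{i:a_i>0\}$; $G(I)$ is the minimal monomial generating set. For an ideal $I$, $\min(I)$ is the set of minimal primes of $I$. A monomial $u\neq 1$ with $u\notin I$ is a cleaner monomial of $I$ if $\min(I+Su)\subseteq\min(I)$. For $k\ge 0$, the class of $k$-clean monomial ideals is defined recursively (smallest class closed under the rule): a proper monomial ideal $I$ is $k$-clean if either $I$ is prime, or $I$ has no embedded primes and there is a cleaner monomial $u$ of $I$ with $|\mathrm{supp}(u)|\le k+1$ such that $I:u$ and $I+Su$ are $k$-clean. $k$-decomposable ideals: for monomials $v=\mathbf x^{\mathbf a}$ and $w$, write $[v,w]=1$ if $x_i^{\mathbf a(i)}\nmid w$ for all $i\in\mathrm{supp}(v)$, and $[v,w]\neq1$ otherwise; set $I^v=(w\in G(I):[v,w]\ne 1)$ and $I_v=(w\in G(I):[v,w]=1)$. A monomial $v$ is a shedding monomial of $I$ if $I_v\ne 0$ and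 for each $u_i\in G(I_v)$ and each $l\in\mathrm{supp}(v)$ there exists $u_j\in G(I^v)$ with $u_j:u_i=x_l$. A monomial ideal $I$ is $k$-decomposable (recursively) if $|G(I)|=1$, or $I$ has a shedding monomial $v$ with $|\mathrm{supp}(v)|\le k+1$ such that $I^v$ and $I_v$ are $k$-decomposable. *)

(* Monomial ideals of S = K[x_1..x_n] are represented
   combinatorially by the set of monomials they contain. *)
From HB Require Import structures.
From mathcomp Require Import all_boot.
Set Implicit Arguments. Unset Strict Implicit. Unset Printing Implicit Defensive.

Section MonomialIdeals.
Variable n : nat.

(* A monomial x^a is its exponent vector a : 'I_n -> nat. *)
Definition mon := {ffun 'I_n -> nat}.
Definition mideal := mon -> Prop.

Definition mone : mon := [ffun _ => 0].
Definition mmul (u v : mon) : mon := [ffun i => u i + v i].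
Definition mdvd (u v : mon) : Prop := forall i, u i <= v i.
Definition supp (u : mon) : {set 'I_n} := [set i | 0 < u i].
Definition deg (u : mon) : nat := \sum_i u i.
(* x_F = prod_{i in F} x_i *)
Definition xset (F : {set 'I_n}) : mon := [ffun i => nat_of_bool (i \in F)].
Definition xvar (l : 'I_n) : mon := [ffun i => nat_of_bool (i == l)].
(* monomial colon u : w = u / gcd(u, w) *)
Definition mquot (u w : mon) : mon := [ffun i => u i - w i].

Definition is_monideal (I : mideal) : Prop := forall u v, I u -> I (mmul u v).
Definition mingen (I : mideal) (u : mon) : Prop :=
  I u /\ forall w, I w -> mdvd w u -> w = u.
Definition squarefree (I : mideal) : Prop :=
  forall u, mingen I u -> forall i, u i <= 1.
Definition proper (I : mideal) : Prop := ~ I mone.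

Definition mcolon (I : mideal) (u : mon) : mideal := fun v => I (mmul u v).
Definition madd (I : mideal) (u : mon) : mideal := fun v => I v \/ mdvd u v.

Definition mprime (F : {set 'I_n}) : mideal := fun v => exists i, i \in F /\ 0 < v i.
Definition is_prime (I : mideal) : Prop :=
  exists F, forall v, I v <-> mprime F v.
Definition contains_ideal (F : {set 'I_n}) (I : mideal) : Prop :=
  forall v, I v -> mprime F v.
Definition is_minprime (I : mideal) (F : {set 'I_n}) : Prop :=
  contains_ideal F I /\
  forall G, contains_ideal G I -> G \subset F -> G = F.
Definition is_assprime (I : mideal) (F : {set 'I_n}) : Prop :=
  exists u, forall v, mcolon I u v <-> mprime F v.
Definition no_embedded (I : mideal) : Prop :=
  forall F, is_assprime I F -> is_minprime I F.

Definition cleaner (I : mideal) (u : mon) : Prop :=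
  u <> mone /\ ~ I u /\
  forall F, is_minprime (madd I u) F -> is_minprime I F.

Inductive kclean (k : nat) : mideal -> Prop :=
| kclean_prime I : proper I -> is_prime I -> kclean k I
| kclean_step I u : proper I -> no_embedded I -> cleaner I u ->
    #|supp u| <= k.+1 -> kclean k (mcolon I u) -> kclean k (madd I u) ->
    kclean k I.

Definition br1 (v w : mon) : Prop := forall i, i \in supp v -> ~ (v i <= w i).
Definition upper (I : mideal) (v : mon) : mideal :=
  fun u => exists w, mingen I w /\ ~ br1 v w /\ mdvd w u.
Definition lower (I : mideal) (v : mon) : mideal :=
  fun u => exists w, mingen I w /\ br1 v w /\ mdvd w u.

Definition shedding (I : mideal) (v : mon) : Prop :=
  (exists w, lower I v w) /\
  forall ui, mingen (lower I v) ui -> forall l, l \in supp v ->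
    exists uj, mingen (upper I v) uj /\ mquot uj ui = xvar l.

Inductive kdec (k : nat) : mideal -> Prop :=
| kdec_one I u : (forall w, mingen I w <-> w = u) -> kdec k I
| kdec_step I v : shedding I v -> #|supp v| <= k.+1 ->
    kdec k (upper I v) -> kdec k (lower I v) -> kdec k I.

Definition complex := {set 'I_n} -> Prop.
Definition SR (D : complex) : mideal :=
  fun u => exists F, ~ D F /\ mdvd (xset F) u.
(* Delta with I = I_Delta, for squarefree I *)
Definition complex_of (I : mideal) : complex := fun F => ~ I (xset F).
Definition alex_complex (D : complex) : complex := fun F => ~ D (~: F).
Definition alexander_dual (I : mideal) : mideal :=
  SR (alex_complex (complex_of I)).

End MonomialIdeals.

(* For squarefree I, the dual I^∨ is generated by the x_F with P_F a minimal prime of I,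
   so both sides are statements about the antichain Min(I) of supports of minimal primes.
   A cleaner monomial u splits Min(I) into the sets meeting supp u, which are the minimal
   primes of I + Su, and those avoiding it, which are the minimal primes of I : u avoiding
   supp u; the inclusion Min(I + Su) ⊆ Min(I) says precisely that every avoiding F, enlarged
   by any l ∈ supp u, contains a meeting set.  For v = x_(supp u) this is the shedding
   condition in I^∨, whose ideals (I^∨)^v and (I^∨)_v are generated by the same two
   subfamilies.  So k-cleanness of I and k-decomposability of I^∨ are one and the same
   recursive decomposability of Min(I).  As I : u and I + Su need not be squarefree, the
   passage from cleanness is made for arbitrary monomial ideals, using that decomposability
   is inherited by the subfamily of sets avoiding a given set. *)

From Stdlib Require Import Classical FunctionalExtensionality PropExtensionality.
From mathcomp Require Import all_boot zify.
Set Implicit Arguments. Unset Strict Implicit. Unset Printing Implicit Defensive.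

Lemma pred_ext (T : Type) (P Q : T -> Prop) : (forall x, P x <-> Q x) -> P = Q.
Proof.
by move=> PQ; apply: functional_extensionality => x; apply: propositional_extensionality.
Qed.

Definition set_family (X : finType) := {set X} -> Prop.

Section Families.
Variable X : finType.
Implicit Types (M : set_family X) (F G V W : {set X}).

Lemma disjointNP F V : reflect (exists2 x, x \in F & x \in V) (~~ [disjoint F & V]).
Proof.
rewrite -setI_eq0; apply: (iffP (set0Pn _)) => [[x]|[x xF xV]]; last by exists x; rewrite inE xF.
by rewrite inE => /andP[]; exists x.
Qed.

Lemma disjoint_setU1 F W l : [disjoint l |: F & W] = (l \notin W) && [disjoint F & W].
Proof. by rewrite !disjoints_subset subUset sub1set inE. Qed.

Lemma disjoint_setD F V W :
  [disjoint F & W] -> [disjoint F & V :\: W] = [disjoint F & V].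
Proof.
move=> FW; have /setDidPl FVW : [disjoint F :&: V & W] by exact: disjointWl (subsetIl F V) FW.
by rewrite -!setI_eq0 setIDA FVW.
Qed.

Definition avoiding M V : set_family X := fun F => M F /\ [disjoint F & V].
Definition meeting M V : set_family X := fun F => M F /\ ~~ [disjoint F & V].
Definition shedding_set M V := forall F, avoiding M V F -> forall l, l \in V ->
  exists2 G, meeting M V G & G \subset l |: F.
Definition antichain M := forall F G, M F -> M G -> F \subset G -> F = G.

Inductive decomposable (k : nat) : set_family X -> Prop :=
| decomposable_single M F : (forall G, M G <-> G = F) -> decomposable k M
| decomposable_shed M V : #|V| <= k.+1 -> shedding_set M V ->
    decomposable k (meeting M V) -> decomposable k (avoiding M V) ->
    decomposable k M.

Lemma decomposable_nonempty k M : decomposable k M -> exists F, M F.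
Proof.
by elim=> [{}M F /(_ F) [_ /(_ erefl)] | {}M V _ _ _ [F [MF _]] _ _]; exists F.
Qed.

Lemma antichainW M M' : (forall F, M' F -> M F) -> antichain M -> antichain M'.
Proof. by move=> M'M anti F G /M'M MF /M'M MG; apply: anti. Qed.

Lemma meeting_avoiding_setD M V W :
  meeting (avoiding M W) (V :\: W) = avoiding (meeting M V) W.
Proof.
apply: pred_ext => F; split=> [[[MF FW] FVW]|[[MF FV] FW]].
  by rewrite disjoint_setD in FVW.
by split; rewrite ?disjoint_setD.
Qed.

Lemma avoiding_avoiding_setD M V W :
  avoiding (avoiding M W) (V :\: W) = avoiding (avoiding M V) W.
Proof.
apply: pred_ext => F; split=> [[[MF FW] FVW]|[[MF FV] FW]].
  by rewrite disjoint_setD in FVW.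
by split; rewrite ?disjoint_setD.
Qed.

Lemma shedding_set_avoiding M V W :
  shedding_set M V -> shedding_set (avoiding M W) (V :\: W).
Proof.
move=> shedV F [[MF FW] FVW] l; rewrite in_setD => /andP[lW lV].
rewrite disjoint_setD // in FVW.
have [G GV GlF] := shedV F (conj MF FVW) l lV.
have GW : [disjoint G & W] by apply: disjointWl GlF _; rewrite disjoint_setU1 lW.
by exists G => //; rewrite meeting_avoiding_setD.
Qed.

Lemma decomposable_avoiding k M W :
  decomposable k M -> (exists F, avoiding M W F) -> decomposable k (avoiding M W).
Proof.
elim=> {M} [M F MF | M V Vk shedV _ IHmeet _ IHavoid] MW.
  case: MW => _ [/MF -> FW]; apply: (@decomposable_single k _ F) => G.
  by split=> [[/MF]|->] //; split=> //; exact/MF.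
have [AAW | noAAW] := classic (exists F, avoiding (avoiding M V) W F); last first.
  suff E : avoiding M W = avoiding (meeting M V) W by rewrite E in MW *; exact: IHmeet.
  apply: pred_ext => F; split=> [[MF FW]|[[]]] //; do !split=> //.
  by apply/negP => FV; apply: noAAW; exists F.
have [MAW | noMAW] := classic (exists F, avoiding (meeting M V) W F); last first.
  suff -> : avoiding M W = avoiding (avoiding M V) W by exact: IHavoid AAW.
  apply: pred_ext => F; split=> [[MF FW]|[[]]] //; do !split=> //.
  by apply/negPn/negP => FV; apply: noMAW; exists F.
apply: (@decomposable_shed k _ (V :\: W)).
- exact: leq_trans (subset_leq_card (subsetDl V W)) Vk.
- exact: shedding_set_avoiding.
- by rewrite meeting_avoiding_setD; exact: IHmeet MAW.
- by rewrite avoiding_avoiding_setD; exact: IHavoid AAW.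
Qed.

End Families.

Section MonomialIdeals.
Variable n : nat.
Implicit Types (u v w g h : mon n) (I J : mideal n) (F G V : {set 'I_n})
  (M : set_family 'I_n).

Lemma mdvd_refl u : mdvd u u. Proof. by []. Qed.

Lemma mdvd_trans u v w : mdvd u v -> mdvd v w -> mdvd u w.
Proof. by move=> uv vw i; exact: leq_trans (uv i) (vw i). Qed.

Lemma mdvd_anti u v : mdvd u v -> mdvd v u -> u = v.
Proof. by move=> uv vu; apply/ffunP => i; apply/eqP; rewrite eqn_leq uv vu. Qed.

Lemma mmulC u v : mmul u v = mmul v u.
Proof. by apply/ffunP => i; rewrite !ffunE addnC. Qed.

Lemma mmulA u v w : mmul u (mmul v w) = mmul (mmul u v) w.
Proof. by apply/ffunP => i; rewrite !ffunE addnA. Qed.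

Lemma mmulm1 u : mmul u (mone n) = u.
Proof. by apply/ffunP => i; rewrite !ffunE addn0. Qed.

Lemma suppE u i : (i \in supp u) = (0 < u i). Proof. by rewrite inE. Qed.
Lemma xsetE F i : xset F i = (i \in F). Proof. by rewrite ffunE. Qed.
Lemma xvarE (l i : 'I_n) : xvar l i = (i == l). Proof. by rewrite ffunE. Qed.

Lemma supp_xset V : supp (xset V) = V.
Proof. by apply/setP => i; rewrite suppE xsetE lt0b. Qed.

Lemma monideal_mdvd I g u : is_monideal I -> I g -> mdvd g u -> I u.
Proof.
move=> monI Ig gu; have -> : u = mmul g (mquot u g).
  by apply/ffunP => i; rewrite !ffunE subnKC.
exact: monI.
Qed.

Lemma mdvd_deg_ltn w u : mdvd w u -> w <> u -> deg w < deg u.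
Proof.
move=> wu; case: (pickP (fun i => w i < u i)) => [i wui _ | eq_wu []]; last first.
  by apply/ffunP => i; apply/eqP; rewrite eqn_leq wu leqNgt eq_wu.
rewrite /deg (bigD1 i) //= [X in _ < X](bigD1 i) //= -addSn leq_add //.
exact: leq_sum.
Qed.

Lemma exists_mingen I u : I u -> exists2 w, mingen I w & mdvd w u.
Proof.
elim: {u}(deg u).+1 {-2}u (ltnSn (deg u)) => // d IH u ltud Iu.
have [[w Iw [wu neq_wu]] | nomin] := classic (exists2 w, I w & mdvd w u /\ w <> u).
  have [w' w'min w'w] := IH w (leq_trans (mdvd_deg_ltn wu neq_wu) ltud) Iw.
  by exists w' => //; exact: mdvd_trans w'w wu.
exists u => //; split=> // w Iw wu; apply: NNPP => neq_wu; apply: nomin.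
by exists w.
Qed.

Lemma squarefree_supp I v v' : is_monideal I -> squarefree I -> I v ->
  supp v \subset supp v' -> I v'.
Proof.
move=> monI sqfI Iv /subsetP vv'; have [h hmin hv] := exists_mingen Iv.
apply: (monideal_mdvd monI hmin.1) => i; case: (posnP (h i)) => [-> // | hi].
have := vv' i; rewrite !suppE => /(_ (leq_trans hi (hv i))).
by have := sqfI h hmin i; lia.
Qed.

Lemma mprimeP F v : mprime F v <-> ~~ [disjoint F & supp v].
Proof.
split=> [[i [iF vi]] | /disjointNP [i iF]]; last by rewrite suppE; exists i.
by apply/disjointNP; exists i; rewrite ?suppE.
Qed.

Lemma mprime_mone F : ~ mprime F (mone n).
Proof. by case=> i [_]; rewrite ffunE. Qed.

Lemma mprime_xvar F l : mprime F (xvar l) <-> l \in F.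
Proof.
split=> [[i [iF]] | lF]; last by exists l; rewrite xvarE eqxx.
by rewrite xvarE lt0b => /eqP <-.
Qed.

Lemma contains_mprime J F G : (forall v, J v <-> mprime F v) ->
  contains_ideal G J <-> F \subset G.
Proof.
move=> JF; split=> [GJ | /subsetP FG v /JF [i [iF vi]]]; last by exists i; split; [exact: FG|].
by apply/subsetP => l /mprime_xvar /JF /GJ /mprime_xvar.
Qed.

Lemma minprime_mprime J F : (forall v, J v <-> mprime F v) ->
  forall G, is_minprime J G <-> G = F.
Proof.
move=> JF G; split=> [[/(contains_mprime _ JF) FG minG] | ->].
  by apply/esym/minG; first exact/(contains_mprime _ JF).
split=> [|G' /(contains_mprime _ JF) FG' G'F]; first exact/(contains_mprime _ JF).
by apply/eqP; rewrite eqEsubset G'F.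
Qed.

Lemma exists_minprime J F :
  contains_ideal F J -> exists2 G : {set 'I_n}, G \subset F & is_minprime J G.
Proof.
elim: {F}#|F|.+1 {-2}F (ltnSn #|F|) => // d IH F ltFd FJ.
have [[G GJ ltGF] | nomin] := classic (exists2 G : {set 'I_n}, contains_ideal G J & G \proper F).
  have [G' G'G minG'] := IH G (leq_trans (proper_card ltGF) ltFd) GJ.
  by exists G' => //; exact: subset_trans G'G (proper_sub ltGF).
exists F => //; split=> // G GJ GF; apply: NNPP => neqGF; apply: nomin.
by exists G; rewrite // properEneq GF andbT; apply/eqP.
Qed.

Lemma antichain_minprime J : antichain (is_minprime J).
Proof. by move=> F G [FJ _] [_ minG] FG; apply: minG. Qed.

Lemma minprime_proper J F : is_minprime J F -> ~ J (mone n).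
Proof. by move=> [FJ _] /FJ /mprime_mone. Qed.

Lemma monideal_mcolon J u : is_monideal J -> is_monideal (mcolon J u).
Proof. by move=> monJ v w; rewrite /mcolon mmulA; apply: monJ. Qed.

Lemma monideal_madd J u : is_monideal J -> is_monideal (madd J u).
Proof.
move=> monJ v w [Jv | uv]; [left; exact: monJ | right].
by move=> i; rewrite ffunE; exact: leq_trans (uv i) (leq_addr _ _).
Qed.

Lemma mem_mcolon J u v : is_monideal J -> J v -> mcolon J u v.
Proof. by move=> monJ Jv; rewrite /mcolon mmulC; apply: monJ. Qed.

Lemma contains_mcolon J u F : [disjoint F & supp u] ->
  contains_ideal F J -> contains_ideal F (mcolon J u).
Proof.
move=> Fu FJ v /FJ [i [iF]]; rewrite ffunE => uvi; exists i; split=> //.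
by move: uvi; have := disjointFr Fu iF; rewrite suppE lt0n => /negbFE /eqP ->.
Qed.

Lemma minprime_mcolon J u F : is_monideal J -> [disjoint F & supp u] ->
  is_minprime (mcolon J u) F <-> is_minprime J F.
Proof.
move=> monJ Fu.
have minJ_mcolon G : [disjoint G & supp u] -> is_minprime J G -> is_minprime (mcolon J u) G.
  move=> Gu [GJ minG]; split; first exact: contains_mcolon.
  by move=> G' G'Ju; apply: minG => v Jv; apply: G'Ju; exact: mem_mcolon.
split=> [[FJu minF] | ]; last exact: minJ_mcolon.
have [G GF minG] := exists_minprime (fun v Jv => FJu v (mem_mcolon u monJ Jv)).
by rewrite -(minF G (minJ_mcolon G (disjointWl GF Fu) minG).1 GF).
Qed.

Lemma minprime_madd J u F : is_minprime J F -> ~~ [disjoint F & supp u] ->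
  is_minprime (madd J u) F.
Proof.
move=> [FJ minF] /disjointNP [i iF iu].
split=> [v [/FJ // | uv] | G GJu]; last by apply: minF => v Jv; apply: GJu; left.
by exists i; split=> //; rewrite suppE in iu; exact: leq_trans iu (uv i).
Qed.

Lemma minprime_madd_meets J u F : is_minprime (madd J u) F -> ~~ [disjoint F & supp u].
Proof. by move=> [/(_ u (or_intror (mdvd_refl u))) /mprimeP]. Qed.

Lemma minprime_madd_sub_shedding J u :
  (forall F, is_minprime (madd J u) F -> is_minprime J F) <->
  shedding_set (is_minprime J) (supp u).
Proof.
split=> [cleanu F [[FJ _] _] l lu | shedu F minF].
  have lFJu : contains_ideal (l |: F) (madd J u).
    move=> v [/FJ [i [iF vi]] | uv]; first by exists i; rewrite in_setU1 iF orbT.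
    rewrite suppE in lu; exists l; split; [exact: setU11 | exact: leq_trans lu (uv l)].
  have [G GlF minG] := exists_minprime lFJu.
  by exists G => //; split; [exact: cleanu | exact: minprime_madd_meets minG].
suff [G [minG Gu] GF] : exists2 G, meeting (is_minprime J) (supp u) G & G \subset F.
  by rewrite -(antichain_minprime (minprime_madd minG Gu) minF GF).
have [G GF minG] := exists_minprime (fun v Jv => minF.1 v (or_introl Jv)).
case: (boolP [disjoint G & supp u]) => Gu; last by exists G.
have /disjointNP [l lF lu] := minprime_madd_meets minF.
have [G' meetG' G'lG] := shedu G (conj minG Gu) l lu.
by exists G' => //; apply: subset_trans G'lG _; rewrite subUset sub1set lF GF.
Qed.

Lemma minprime_madd_meeting J u :
  (forall F, is_minprime (madd J u) F -> is_minprime J F) ->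
  is_minprime (madd J u) = meeting (is_minprime J) (supp u).
Proof.
move=> cleanu; apply: pred_ext => F; split=> [minF | [minF Fu]]; last exact: minprime_madd.
by split; [exact: cleanu | exact: minprime_madd_meets minF].
Qed.

Lemma avoiding_minprime_mcolon J u : is_monideal J ->
  avoiding (is_minprime (mcolon J u)) (supp u) = avoiding (is_minprime J) (supp u).
Proof.
by move=> monJ; apply: pred_ext => F; split=> -[minF Fu]; split=> //;
  apply/(minprime_mcolon monJ Fu).
Qed.

Lemma kclean_decomposable k J : kclean k J -> is_monideal J -> decomposable k (is_minprime J).
Proof.
elim=> {J} [J _ [F JF] | J u _ _ [_ [_ cleanu]] usz _ IHcolon _ IHadd] monJ.
  by apply: (@decomposable_single _ k _ F) => G; exact: minprime_mprime.
have := IHadd (monideal_madd monJ); rewrite (minprime_madd_meeting cleanu) => meetu.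
have [[F0 avoidF0] | noavoid] := classic (exists F, avoiding (is_minprime J) (supp u) F);
  last first.
  suff <- : meeting (is_minprime J) (supp u) = is_minprime J by [].
  apply: pred_ext => F; split=> [[] // | minF]; split=> //.
  by apply/negP => Fu; apply: noavoid; exists F.
apply: (@decomposable_shed _ k _ (supp u)) => //; first exact/minprime_madd_sub_shedding.
rewrite -(avoiding_minprime_mcolon u monJ).
apply: decomposable_avoiding; first exact: IHcolon (monideal_mcolon monJ).
by exists F0; rewrite avoiding_minprime_mcolon.
Qed.

Definition xset_ideal M : mideal n := fun u => exists F, M F /\ mdvd (xset F) u.

Lemma xset_mdvd F G : mdvd (xset G) (xset F) <-> G \subset F.
Proof.
split=> [GF | /subsetP GF i]; last by rewrite !xsetE; case: (boolP (i \in G)) => [/GF ->|].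
by apply/subsetP => i iG; have := GF i; rewrite !xsetE iG; case: (i \in F).
Qed.

Lemma xset_inj : injective (@xset n).
Proof.
move=> F G FG; apply/eqP; rewrite eqEsubset.
by apply/andP; split; apply/xset_mdvd; rewrite FG; exact: mdvd_refl.
Qed.

Lemma mingen_xset_ideal M w : antichain M ->
  mingen (xset_ideal M) w <-> exists2 F, M F & w = xset F.
Proof.
move=> antiM; split=> [[[F [MF Fw]] minw] | [F MF ->]].
  by exists F => //; apply/esym/minw => //; exists F; split=> //; exact: mdvd_refl.
split=> [|w' [G [MG Gw']] w'F]; first by exists F; split=> //; exact: mdvd_refl.
have GF : G \subset F by apply/xset_mdvd; exact: mdvd_trans Gw' w'F.
by apply: mdvd_anti w'F _; rewrite -(antiM G F MG MF GF).
Qed.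

Lemma br1_xset v F : br1 v (xset F) <-> [disjoint F & [set i | v i == 1]].
Proof.
split=> [brv | FV i].
  apply/negPn/negP => /disjointNP [i iF]; rewrite inE => /eqP vi.
  by apply: (brv i); rewrite ?suppE vi // xsetE iF.
rewrite suppE xsetE => vi; case: (boolP (i \in F)) => iF /= vF.
  by have := disjointFr FV iF; rewrite inE eqn_leq vF vi.
by move: vF; rewrite leqNgt vi.
Qed.

Lemma upper_xset_ideal M v : antichain M ->
  upper (xset_ideal M) v = xset_ideal (meeting M [set i | v i == 1]).
Proof.
move=> antiM; apply: pred_ext => u; split.
  move=> [_ [/(mingen_xset_ideal _ antiM) [F MF ->] [brF Fu]]].
  by exists F; do !split=> //; apply/negP => FV; apply: brF; exact/br1_xset.
move=> [F [[MF FV] Fu]]; exists (xset F); split.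
  by apply/(mingen_xset_ideal _ antiM); exists F.
by split=> // /br1_xset; apply/negP.
Qed.

Lemma lower_xset_ideal M v : antichain M ->
  lower (xset_ideal M) v = xset_ideal (avoiding M [set i | v i == 1]).
Proof.
move=> antiM; apply: pred_ext => u; split.
  move=> [_ [/(mingen_xset_ideal _ antiM) [F MF ->] [brF Fu]]].
  by exists F; do !split=> //; exact/br1_xset.
move=> [F [[MF FV] Fu]]; exists (xset F); split.
  by apply/(mingen_xset_ideal _ antiM); exists F.
by split=> //; exact/br1_xset.
Qed.

Lemma mquot_xsetP F G l :
  mquot (xset G) (xset F) = xvar l <-> [/\ l \in G, l \notin F & G \subset l |: F].
Proof.
split=> [E | [lG lF /subsetP GlF]].
  have Ei i : (i \in G) - (i \in F) = (i == l).
    by have := congr1 (fun f : mon n => f i) E; rewrite !ffunE.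
  have := Ei l; rewrite eqxx.
  case: (boolP (l \in G)); case: (boolP (l \in F)) => // lF lG _; split=> //.
  apply/subsetP => i iG; rewrite in_setU1.
  by have := Ei i; rewrite iG; case: (i == l); case: (i \in F).
apply/ffunP => i; rewrite !ffunE; case: (eqVneq i l) => [-> | il]; first by rewrite lG (negbTE lF).
by case: (boolP (i \in G)) => // /GlF; rewrite in_setU1 (negbTE il) /= => ->.
Qed.

Lemma decomposable_kdec k M : decomposable k M -> antichain M -> kdec k (xset_ideal M).
Proof.
elim=> {M} [M F MF | M V Vk shedV _ IHmeet avoidV IHavoid] antiM.
  apply: (@kdec_one n k _ (xset F)) => w; rewrite (mingen_xset_ideal _ antiM).
  by split=> [[G /MF -> ->] // | ->]; exists F => //; exact/MF.
have onesV : [set i | xset V i == 1] = V by apply/setP => i; rewrite inE xsetE; case: (i \in V).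
have antiA : antichain (avoiding M V) by apply: antichainW antiM => F [].
have antiMe : antichain (meeting M V) by apply: antichainW antiM => F [].
apply: (@kdec_step n k _ (xset V));
  rewrite ?upper_xset_ideal ?lower_xset_ideal ?onesV ?supp_xset //;
  [split | exact: IHmeet antiMe | exact: IHavoid antiA].
  have [F0 AF0] := decomposable_nonempty avoidV.
  by exists (xset F0); rewrite lower_xset_ideal // onesV; exists F0; split.
move=> ui; rewrite lower_xset_ideal // onesV => /(mingen_xset_ideal _ antiA) [F [MF FV] ->] l.
rewrite supp_xset => lV; have [G [MG GV] GlF] := shedV F (conj MF FV) l lV.
exists (xset G); split.
  by rewrite upper_xset_ideal // onesV; apply/(mingen_xset_ideal _ antiMe); exists G.
apply/mquot_xsetP; split=> //; last by rewrite (disjointFl FV lV).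
have /disjointNP [j jG jV] := GV.
by have := subsetP GlF j jG; rewrite in_setU1 (disjointFl FV jV) orbF => /eqP <-.
Qed.

Lemma kdec_decomposable k I : kdec k I ->
  forall M, antichain M -> I = xset_ideal M -> decomposable k M.
Proof.
elim=> {I} [I u Iu | I v [_ shedv] vsz _ IHup _ IHlow] M antiM EI; subst I.
  have [F MF uF] : exists2 F, M F & u = xset F by apply/(mingen_xset_ideal _ antiM)/Iu.
  apply: (@decomposable_single _ k _ F) => G; split=> [MG | -> //].
  by apply: xset_inj; rewrite -uF; apply/Iu/(mingen_xset_ideal _ antiM); exists G.
set V := [set i | v i == 1].
have antiA : antichain (avoiding M V) by apply: antichainW antiM => F [].
have antiMe : antichain (meeting M V) by apply: antichainW antiM => F [].
apply: (@decomposable_shed _ k _ V).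
- apply: leq_trans vsz; apply: subset_leq_card; apply/subsetP => i.
  by rewrite suppE inE => /eqP ->.
- move=> F [MF FV] l lV.
  have lv : l \in supp v by move: lV; rewrite suppE inE => /eqP ->.
  have Fmin : mingen (lower (xset_ideal M) v) (xset F).
    by rewrite lower_xset_ideal //; apply/(mingen_xset_ideal _ antiA); exists F.
  have [uj []] := shedv _ Fmin l lv.
  rewrite upper_xset_ideal // => /(mingen_xset_ideal _ antiMe) [G MG ->].
  by move=> /mquot_xsetP [_ _ GlF]; exists G.
- by apply: IHup antiMe _; exact: upper_xset_ideal.
- by apply: IHlow antiA _; exact: lower_xset_ideal.
Qed.

Lemma squarefree_notin I v : is_monideal I -> squarefree I -> ~ I v ->
  exists2 F, is_minprime I F & ~ mprime F v.
Proof.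
move=> monI sqfI notIv.
have zerosI : contains_ideal [set i | v i == 0] I.
  move=> w Iw; apply: NNPP => wz; apply: notIv; apply: squarefree_supp monI sqfI Iw _.
  apply/subsetP => i; rewrite !suppE !lt0n => wi; apply/negP => vi.
  by apply: wz; exists i; rewrite inE vi lt0n.
have [F Fz minF] := exists_minprime zerosI.
by exists F => // -[i [/(subsetP Fz)]]; rewrite inE => /eqP ->.
Qed.

Lemma squarefree_no_embedded I : is_monideal I -> squarefree I -> no_embedded I.
Proof.
move=> monI sqfI F [w Fw].
(* if w_j > 0 then w x_j has the support of w, which would put 1 in I : w *)
have Fw0 j : j \in F -> w j = 0.
  move=> jF; apply/eqP; rewrite -leqn0 leqNgt; apply/negP => wj.
  have Iwj : mcolon I w (xvar j) by apply/Fw/mprime_xvar.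
  have Iw : mcolon I w (mone n).
    rewrite /mcolon mmulm1; apply: squarefree_supp monI sqfI Iwj _.
    by apply/subsetP => i; rewrite !suppE ffunE xvarE; case: eqP => [-> | _]; rewrite ?addn0.
  by move/Fw: Iw; apply: mprime_mone.
split=> [v Iv | G GI GF]; first by apply/Fw; exact: mem_mcolon.
apply/eqP; rewrite eqEsubset GF; apply/subsetP => i iF.
have /GI [j [jG]] : mcolon I w (xvar i) by apply/Fw/mprime_xvar.
by rewrite ffunE xvarE (Fw0 j (subsetP GF j jG)) add0n lt0b => /eqP <-.
Qed.

Lemma squarefree_contains I F : is_monideal I -> squarefree I ->
  contains_ideal F I <-> ~ I (xset (~: F)).
Proof.
move=> monI sqfI; split=> [FI /FI [i [iF]] | notI w Iw]; first by rewrite xsetE inE iF.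
apply: NNPP => Fw; apply: notI; apply: squarefree_supp monI sqfI Iw _.
by apply/subsetP => i; rewrite supp_xset !inE => wi; apply/negP => iF; apply: Fw; exists i.
Qed.

Lemma alexander_dual_minprime I : is_monideal I -> squarefree I ->
  alexander_dual I = xset_ideal (is_minprime I).
Proof.
move=> monI sqfI; apply: pred_ext => u; split=> [[F [dualF Fu]] | [F [[FI _] Fu]]].
  have FI : contains_ideal F I.
    by apply/(squarefree_contains _ monI sqfI) => IF; apply: dualF => notIF; exact: notIF IF.
  have [G GF minG] := exists_minprime FI.
  by exists G; split=> //; apply: mdvd_trans Fu; exact/xset_mdvd.
exists F; split=> // notnotIF; apply: notnotIF.
exact/(squarefree_contains _ monI sqfI).
Qed.

Lemma squarefree_mcolon I u : is_monideal I -> squarefree I -> squarefree (mcolon I u).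
Proof.
move=> monI sqfI g [Ig ming] i; rewrite leqNgt; apply/negP => gi.
pose g' : mon n := [ffun j => g j - (j == i)].
have g'g : mdvd g' g by move=> j; rewrite ffunE leq_subr.
have Ig' : mcolon I u g'.
  apply: squarefree_supp monI sqfI Ig _; apply/subsetP => j; rewrite !suppE !ffunE.
  by case: eqP => [-> | _]; lia.
by have := congr1 (fun f : mon n => f i) (ming g' Ig' g'g); rewrite /= ffunE eqxx; lia.
Qed.

Lemma squarefree_madd_xset I V : squarefree I -> squarefree (madd I (xset V)).
Proof.
move=> sqfI g [[Ig | Vg] ming] i.
  have [h hmin hg] := exists_mingen Ig.
  by rewrite -(ming h (or_introl hmin.1) hg); exact: sqfI.
by rewrite -(ming (xset V) (or_intror (mdvd_refl _)) Vg) xsetE leq_b1.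
Qed.

Lemma minprime_mcolon_xset I V : is_monideal I -> squarefree I ->
  is_minprime (mcolon I (xset V)) = avoiding (is_minprime I) V.
Proof.
move=> monI sqfI; apply: pred_ext => F.
have minprimeE : [disjoint F & V] -> is_minprime (mcolon I (xset V)) F <-> is_minprime I F.
  by move=> FV; apply: minprime_mcolon; rewrite ?supp_xset.
split=> [minF | [minF FV]]; last exact/minprimeE.
suff FV : [disjoint F & V] by split=> //; exact/minprimeE.
apply/negPn/negP => /disjointNP [j jF jV].
(* zeroing the V-exponents keeps v in I : x_V, so F minus any j in V still contains I : x_V *)
have FjI : contains_ideal (F :\ j) (mcolon I (xset V)).
  move=> v Iv; pose v' : mon n := [ffun i => if i \in V then 0 else v i].
  have Iv' : mcolon I (xset V) v'.
    apply: squarefree_supp monI sqfI Iv _; apply/subsetP => i; rewrite !suppE !ffunE.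
    by case: (i \in V).
  have [i [iF]] := minF.1 v' Iv'; rewrite ffunE; case: ifPn => // iV vi.
  by exists i; split=> //; rewrite in_setD1 iF andbT; apply: contraNneq iV => ->.
by have := minF.2 _ FjI (subD1set F j) => /setP /(_ j); rewrite in_setD1 eqxx jF.
Qed.

Lemma decomposable_kclean k M : decomposable k M ->
  forall I, is_monideal I -> squarefree I -> is_minprime I = M -> kclean k I.
Proof.
elim=> {M} [M F MF | M V Vk shedV meetV IHmeet avoidV IHavoid] I monI sqfI EM; subst M.
  have minF := (MF F).2 erefl.
  apply: kclean_prime; first exact: minprime_proper minF.
  exists F => v; split=> [/minF.1 // | Fv]; apply: NNPP => notIv.
  by have [G /MF -> []] := squarefree_notin monI sqfI notIv.
have cleanV : forall F, is_minprime (madd I (xset V)) F -> is_minprime I F.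
  by apply/minprime_madd_sub_shedding; rewrite supp_xset.
have [F0 [minF0 F0V]] := decomposable_nonempty avoidV.
have [G [_ /disjointNP [i _ iV]]] := decomposable_nonempty meetV.
apply: (@kclean_step n k I (xset V)).
- exact: minprime_proper minF0.
- exact: squarefree_no_embedded.
- split=> [/(congr1 (fun f : mon n => f i)) | ]; first by rewrite !ffunE iV.
  by split=> //; move/minF0.1/mprimeP; rewrite supp_xset F0V.
- by rewrite supp_xset.
- apply: IHavoid; [exact: monideal_mcolon | exact: squarefree_mcolon | exact: minprime_mcolon_xset].
- apply: IHmeet; [exact: monideal_madd | exact: squarefree_madd_xset | ].
  by rewrite (minprime_madd_meeting cleanV) supp_xset.
Qed.

End MonomialIdeals.

Theorem corollary4p4 (n k : nat) (I : mideal n) :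
  is_monideal I -> squarefree I -> (forall u, mingen I u -> 2 <= deg u) ->
  kclean k I <-> kdec k (alexander_dual I).
Proof.
move=> monI sqfI _; rewrite (alexander_dual_minprime monI sqfI).
split=> [/kclean_decomposable dec | /kdec_decomposable dec].
  exact: decomposable_kdec (dec monI) (@antichain_minprime n I).
exact: decomposable_kclean (dec _ (@antichain_minprime n I) erefl) I monI sqfI erefl.
Qed.
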